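(* Let $\mathcal T$ be an $n$-leaf tree with $n\ge 3$ and nonnegative edge weights, and let $v_{\mathcal T}$ be its tree game. - If all internal edge weights are zero, then the core of $(N,v_{\mathcal T})$ consists of the single vector $\vec\ell=(\alpha_1,\dots,\alpha_n)$ of leaf weights. - Otherwise (some internal edge has positive weight), the core is empty.
   Context: An $n$-leaf tree here is an unrooted tree whose leaves are labeled by $N=\{1,\dots,n\}$ and whose internal vertices all have degree 3. The edge incident to leaf $i$ is the leaf edge $i$, with weight $\alpha_i$. The remaining $n-3$ edges are internal edges. All edge weights are real numbers $\ge 0$. The tree game $v_{\mathcal T}$ assigns to each $S\subseteq N$ the sum of the weights of the edges of the minimal subtree spanning the leaves in $S$. In particular $v_{\mathcal T}(\emptyset)=0$ and $v_{\mathcal T}(\{i\})=0$. The core of a cooperative game $(N,v)$ is the set of vectors $x\in\mathbb R^n$ with $\sum_{i\in S}x_i\ge v(S)$ for all $S\subseteq N$ and $\sum_{i\in N}x_i=v(N)$. *)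

From HB Require Import structures.
From mathcomp Require Import all_boot all_order all_algebra.
Set Implicit Arguments. Unset Strict Implicit. Unset Printing Implicit Defensive.
Import Order.TTheory GRing.Theory Num.Theory.
Local Open Scope ring_scope.

Section TreeGame.
Variable V : finType.
Variable e : rel V.

Definition edges : {set {set V}} := [set [set p.1; p.2] | p in [set q : V * V | e q.1 q.2]].

Definition connected_on (U : {set V}) : bool :=
  [forall x in U, forall y in U,
     connect [rel a b | [&& e a b, a \in U & b \in U]] x y].

Definition is_tree : Prop :=
  [/\ symmetric e, irreflexive e, connected_on setT & #|edges| = (#|V| - 1)%N].

Definition deg (x : V) : nat := #|[set y | e x y]|.

Definition leaf_tree (n : nat) (l : 'I_n -> V) : Prop :=
  [/\ is_tree, injective l, (forall i, deg (l i) = 1%N)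
    & (forall x, x \notin codom l -> deg x = 3%N)].

Variables (n : nat) (l : 'I_n -> V).

Definition leaf_edge (E : {set V}) : bool := (E \in edges) && [exists i, l i \in E].
Definition internal_edge (E : {set V}) : bool := (E \in edges) && [forall i, l i \notin E].

Definition spans (S : {set 'I_n}) (U : {set V}) : bool :=
  ([set l i | i in S] \subset U) && connected_on U.

Definition min_span (S : {set 'I_n}) (U : {set V}) : bool :=
  spans S U && [forall U' : {set V}, spans S U' ==> (U \subset U')].

Variable R : numDomainType.
Variable wt : {set V} -> R.

Definition tree_game (S : {set 'I_n}) : R :=
  match [pick U | min_span S U] with
  | Some U => \sum_(E in edges | E \subset U) wt E
  | None => 0
  end.

(* alpha_i : weight of the leaf edge at leaf i (the unique edge containing l i) *)
Definition leaf_weight (i : 'I_n) : R := \sum_(E in edges | l i \in E) wt E.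

End TreeGame.

Definition in_core (R : numDomainType) (n : nat) (v : {set 'I_n} -> R)
  (x : 'I_n -> R) : Prop :=
  (forall S : {set 'I_n}, v S <= \sum_(i in S) x i) /\
  \sum_(i < n) x i = v setT.

From mathcomp Require Import all_boot all_order all_algebra.
From mathcomp Require Import zify lra.
Import Order.TTheory GRing.Theory Num.Theory.

Set Implicit Arguments. Unset Strict Implicit. Unset Printing Implicit Defensive.

(* The graph facts rest on degree counting: a tree has [|V| - 1] edges while a
   connected vertex set [X] spans at least [|X| - 1] of them.  In an n-leaf tree
   with [n >= 3] this forces every edge to contain at most one leaf, the minimal
   subtree spanning all leaves to be the whole tree, and the one spanning all
   leaves but [i] to be the tree minus the leaf [l i].  Hence [v(N)] is the total
   weight and [v(N \ i) = v(N) - alpha_i], so a core vector satisfies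
   [x_i <= alpha_i], whereas [sum_i alpha_i = v(N) - (internal weight)].  This
   empties the core when an internal edge is positive and pins it to [alpha]
   otherwise; [alpha] itself is in the core because the minimal subtree spanning
   [S] only contains leaves of [S]. *)

Lemma card_set_fst (T1 T2 : finType) (X : {set T1}) (Q : T1 -> T2 -> bool) :
  #|[set p : T1 * T2 | (p.1 \in X) && Q p.1 p.2]| = (\sum_(x in X) #|[set y | Q x y]|)%N.
Proof.
rewrite -sum1_card (eq_bigl (fun p : T1 * T2 => (p.1 \in X) && Q p.1 p.2)); last first.
  by move=> p; rewrite inE.
rewrite -(pair_big_dep (fun x => x \in X) Q (fun _ _ => 1%N)).
by apply: eq_bigr => x _; rewrite -sum1_card; apply: eq_bigl => y; rewrite inE.
Qed.

Section Graph.
Variables (V : finType) (e : rel V).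
Hypothesis e_sym : symmetric e.

Definition induced (U : {set V}) := [rel a b | [&& e a b, a \in U & b \in U]].

Definition crossing (U : {set V}) : Prop :=
  forall Y : {set V}, Y \subset U -> forall y z, y \in Y -> z \in U -> z \notin Y ->
  exists a b, [/\ a \in Y, b \in U, b \notin Y & e a b].

Lemma connected_onP (U : {set V}) : connected_on e U <-> crossing U.
Proof.
split=> [/forallP cU Y sYU y z yY zU zY | cU].
  have /implyP/(_ zU) yz := forallP (implyP (cU y) (subsetP sYU y yY)) z.
  case: (boolP [exists a, exists b, [&& a \in Y, b \in U, b \notin Y & e a b]]).
    by move=> /existsP [a /existsP [b /and4P [? ? ? ?]]]; exists a, b.
  rewrite negb_exists => /forallP noexit.
  have Ycl : closed (induced U) Y.
    move=> a b /and3P [eab aU bU]; apply/idP/idP => [aY|bY]; apply/negPn/negP.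
    - move=> bY; move/negP: (noexit a); apply; apply/existsP; exists b.
      by rewrite aY bU bY eab.
    - move=> aY; move/negP: (noexit b); apply; apply/existsP; exists a.
      by rewrite bY aU aY e_sym eab.
  by have := closed_connect Ycl yz; rewrite yY (negbTE zY).
apply/forallP => x; apply/implyP => xU; apply/forallP => y; apply/implyP => yU.
set Y := [set t in U | connect (induced U) x t].
have sYU : Y \subset U by apply/subsetP => t; rewrite inE => /andP [].
have xY : x \in Y by rewrite inE xU connect0.
apply/negPn/negP => xy.
have yY : y \notin Y by rewrite inE yU.
have [a [b [aY bU bY eab]]] := cU Y sYU x y xY yU yY.
move: aY bY; rewrite !inE bU /= => /andP [aU xa]; apply/negP/negPn.
by apply: connect_trans xa (connect1 _); rewrite /= eab aU bU.
Qed.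

Lemma deg1_adj_eq u a b : deg e u = 1%N -> e u a -> e u b -> a = b.
Proof.
move=> /eqP /cards1P [c Nu] ua ub.
have : a \in [set y | e u y] by rewrite inE.
have : b \in [set y | e u y] by rewrite inE.
by rewrite Nu !inE => /eqP -> /eqP ->.
Qed.

Lemma connected_on_setD1_deg1 (U : {set V}) u :
  connected_on e U -> deg e u = 1%N -> connected_on e (U :\ u).
Proof.
move=> /connected_onP cU du; apply/connected_onP => Y sY y z yY.
rewrite in_setD1 => /andP [zu zU] zY.
have sYU : Y \subset U by apply: subset_trans sY (subD1set _ _).
have [a [b [aY bU bY eab]]] := cU Y sYU y z yY zU zY.
have [bu|bu] := eqVneq b u; last by exists a, b; rewrite in_setD1 bu bU.
(* The only neighbour of [u] is [a], so an edge leaving [u |: Y] avoids [u]. *)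
subst b; have sY' : u |: Y \subset U by rewrite subUset sub1set bU sYU.
have zY' : z \notin u |: Y by rewrite in_setU1 negb_or zu zY.
have [a' [b' [+ b'U + eab']]] := cU _ sY' y z (setU1r _ yY) zU zY'.
rewrite !in_setU1 negb_or => /predU1P [a'u | a'Y] /andP [b'u b'Y].
  subst a'; have ua : e u a by rewrite e_sym.
  by move: b'Y; rewrite (deg1_adj_eq du eab' ua) aY.
by exists a', b'; rewrite in_setD1 b'u b'U.
Qed.

Lemma connected_on_setC_component (U K : {set V}) :
  connected_on e setT -> connected_on e U -> [disjoint K & U] ->
  (forall a b, a \in K -> b \notin U -> e a b -> b \in K) ->
  connected_on e (~: K).
Proof.
move=> /connected_onP cT /connected_onP cU dKU Kcl.
apply/connected_onP => Y sY y z yY zK zY.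
have YK t : t \in Y -> t \notin K by move=> /(subsetP sY); rewrite inE.
have [sUY | /subsetPn [u2 u2U u2Y]] := boolP (U \subset Y).
  have zKY : z \in ~: K :\: Y by rewrite inE zY zK.
  have yKY : y \notin ~: K :\: Y by rewrite inE yY.
  have [a [b [+ _ + eab]]] := cT _ (subsetT _) z y zKY (in_setT y) yKY.
  rewrite !inE negb_and !negbK => /andP [aY aK] /orP [bY | bK].
    by exists b, a; rewrite inE e_sym.
  have aU : a \notin U by apply: contra aY; apply: (subsetP sUY).
  by move: aK; rewrite (Kcl b a bK aU) // e_sym.
have [YU0 | [u1 u1YU]] := set_0Vmem (Y :&: U).
  have [a [b [aY _ bY eab]]] := cT Y (subsetT _) y z yY (in_setT z) zY.
  have aU : a \notin U by apply/negP => aU; have := in_set0 a; rewrite -YU0 inE aY aU.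
  exists a, b; rewrite bY inE eab; split=> //; apply/negP => bK.
  by move: (YK a aY); rewrite (Kcl b a bK aU) // e_sym.
have u2YU : u2 \notin Y :&: U by rewrite inE (negbTE u2Y).
have [a [b [+ bU + eab]]] := cU _ (subsetIr _ _) u1 u2 u1YU u2U u2YU.
rewrite !inE bU andbT => /andP [aY _] bY.
by exists a, b; rewrite inE (disjointFl dKU bU).
Qed.

Definition arcs (X : {set V}) :=
  [set p : V * V | [&& p.1 \in X, p.2 \in X & e p.1 p.2]].
Definition out_arcs (X : {set V}) :=
  [set p : V * V | [&& p.1 \in X, p.2 \notin X & e p.1 p.2]].

Lemma arcsS (X Y : {set V}) : X \subset Y -> arcs X \subset arcs Y.
Proof.
move=> sXY; apply/subsetP => p; rewrite !inE => /and3P [p1X p2X ->].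
by rewrite (subsetP sXY _ p1X) (subsetP sXY _ p2X).
Qed.

Lemma crossing_grow (X : {set V}) k : crossing X -> (k < #|X|)%N ->
  exists2 Y : {set V}, Y \subset X & #|Y| = k.+1 /\ (2 * k <= #|arcs Y|)%N.
Proof.
move=> cX; elim: k => [|k IH] kX.
  have /card_gt0P [x xX] := kX.
  by exists [set x]; rewrite ?sub1set ?cards1.
have [Y sYX [cardY arcsY]] := IH (ltnW kX).
have /subsetPn [z zX zY] : ~~ (X \subset Y).
  by apply: contraTN kX => /subset_leq_card; rewrite cardY -leqNgt.
have /card_gt0P [y yY] : (0 < #|Y|)%N by rewrite cardY.
have [a [b [aY bX bY eab]]] := cX Y sYX y z yY zX zY.
exists (b |: Y); first by rewrite subUset sub1set bX sYX.
rewrite cardsU1 bY cardY; split=> //.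
have sub : (a, b) |: ((b, a) |: arcs Y) \subset arcs (b |: Y).
  apply/subsetP => p; rewrite !inE => /or3P [/eqP -> | /eqP -> | /and3P [-> -> ->]] /=.
  - by rewrite eqxx aY orbT eab.
  - by rewrite eqxx aY orbT e_sym eab.
  - by rewrite !orbT.
have ba : (b, a) \notin arcs Y by rewrite inE /= (negbTE bY).
have ab : (a, b) \notin (b, a) |: arcs Y.
  rewrite in_setU1 inE /= (negbTE bY) andbF orbF xpair_eqE.
  by apply: contraTN aY => /andP [/eqP -> _].
by move: (subset_leq_card sub); rewrite !cardsU1 ab ba; lia.
Qed.

Lemma card_arcs_connected (X : {set V}) : connected_on e X -> (0 < #|X|)%N ->
  (2 * (#|X| - 1) <= #|arcs X|)%N.
Proof.
move=> /connected_onP cX X0.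
have := @crossing_grow X #|X|.-1 cX; rewrite ltn_predL => /(_ X0) [Y sYX [_ arcsY]].
by move: (subset_leq_card (arcsS sYX)); lia.
Qed.

Lemma sum_deg_arcs (X : {set V}) :
  (\sum_(v in X) deg e v = #|arcs X| + #|out_arcs X|)%N.
Proof.
rewrite /arcs /out_arcs (card_set_fst X (fun v y => (y \in X) && e v y)).
rewrite (card_set_fst X (fun v y => (y \notin X) && e v y)) -big_split /=.
apply: eq_bigr => v _; rewrite /deg -(cardsID X [set y | e v y]).
by congr (_ + _)%N; apply: eq_card => y; rewrite !inE andbC.
Qed.

Lemma out_arcs_gt0 (X : {set V}) x y : connected_on e setT ->
  x \in X -> y \notin X -> (0 < #|out_arcs X|)%N.
Proof.
move=> /connected_onP cT xX yX.
have [a [b [aX _ bX eab]]] := cT X (subsetT X) x y xX (in_setT y) yX.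
by apply/card_gt0P; exists (a, b); rewrite inE /= aX bX eab.
Qed.

End Graph.

Local Open Scope ring_scope.

Lemma tree_game_min_span (V : finType) (e : rel V) n (l : 'I_n -> V)
    (R : numDomainType) (wt : {set V} -> R) S U :
  min_span e l S U -> tree_game e l wt S = \sum_(E in edges e | E \subset U) wt E.
Proof.
move=> minU; rewrite /tree_game; case: pickP => [U' minU' | /(_ U)]; last by rewrite minU.
suff -> : U' = U by [].
move: minU minU' => /andP [sU /forallP mU] /andP [sU' /forallP mU'].
by apply/eqP; rewrite eqEsubset (implyP (mU' U) sU) (implyP (mU U') sU').
Qed.

Section Tree.
Variables (V : finType) (e : rel V).
Hypotheses (e_sym : symmetric e) (e_irr : irreflexive e).
Hypothesis connT : connected_on e setT.
Hypothesis card_edges : #|edges e| = (#|V| - 1)%N.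

Lemma card_arcsT : (#|arcs e setT| <= 2 * (#|V| - 1))%N.
Proof.
rewrite -card_edges -sum1_card.
rewrite (partition_big (fun p : V * V => [set p.1; p.2]) (fun E => E \in edges e)) /=;
  last by move=> p; rewrite !inE /= => ep; apply/imsetP; exists p; rewrite ?inE.
rewrite mulnC -sum_nat_const; apply: leq_sum => _ /imsetP [q _ ->].
rewrite sum1dep_card; apply: (@leq_trans #|[set q; (q.2, q.1)]|); last first.
  by rewrite cards2 ltnS leq_b1.
apply: subset_leq_card; apply/subsetP => -[a b]; rewrite !inE /= => /andP [eab /eqP ab].
have ba : a != b by apply: contraTneq eab => ->; rewrite e_irr.
have : a \in [set q.1; q.2] by rewrite -ab !inE eqxx.
have : b \in [set q.1; q.2] by rewrite -ab !inE eqxx orbT.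
case: q {ab} => q1 q2 /=; rewrite !xpair_eqE.
by move=> /set2P [] ? /set2P [] ?; subst; rewrite ?eqxx ?orbT in ba *.
Qed.

(* The tree has at most [2 (|V| - 1)] arcs, and the connected complement of [K]
   already uses [2 (|~: K| - 1)] of them plus one arc leaving it. *)
Lemma sum_deg_lt_connected_setC (K : {set V}) x y :
  connected_on e (~: K) -> x \in K -> y \notin K -> (\sum_(v in K) deg e v < 2 * #|K|)%N.
Proof.
move=> cK xK yK.
have yKc : y \in ~: K by rewrite inE.
have xKc : x \notin ~: K by rewrite inE xK.
have : (\sum_(v in K) deg e v + \sum_(v in ~: K) deg e v = \sum_(v in setT) deg e v)%N.
  by rewrite [RHS](big_setID K) setTI setTD.
rewrite (sum_deg_arcs e (~: K)) (sum_deg_arcs e setT).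
have -> : out_arcs e setT = set0 by apply/setP => p; rewrite !inE.
have Kc0 : (0 < #|~: K|)%N by apply/card_gt0P; exists y.
have := card_arcs_connected e_sym cK Kc0.
have := out_arcs_gt0 e_sym connT yKc xKc.
have := cardsC K; have := card_arcsT; rewrite cards0; lia.
Qed.

Variables (n : nat) (l : 'I_n -> V).
Hypothesis l_inj : injective l.
Hypothesis deg_leaf : forall i, deg e (l i) = 1%N.
Hypothesis deg_internal : forall x, x \notin codom l -> deg e x = 3%N.
Hypothesis n_gt2 : (2 < n)%N.

(* A component [K] of the vertices outside [U] would contain only internal
   vertices and possibly the leaf [l i], so its degree sum would be too large. *)
Lemma connected_on_leaves_but (U : {set V}) i : connected_on e U ->
  (forall j, j != i -> l j \in U) -> forall w, w != l i -> w \in U.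
Proof.
move=> cU lU w wi; apply/negPn/negP => wU.
have [j ji] : exists j, j != i.
  have /card_gt0P [j] : (0 < #|[set~ i]|)%N by rewrite cardsC1 card_ord; lia.
  by rewrite !inE; exists j.
set K := [set t in ~: U | connect (induced e (~: U)) w t].
have KU v : v \in K -> v \notin U by rewrite !inE => /andP [].
have Kcl a b : a \in K -> b \notin U -> e a b -> b \in K.
  rewrite !inE => /andP [aU wa] bU eab; rewrite bU.
  by apply: connect_trans wa (connect1 _); rewrite /= eab !inE aU bU.
have dKU : [disjoint K & U] by apply/pred0P => v /=; apply/negP => /andP [/KU/negP].
have wK : w \in K by rewrite !inE wU connect0.
have ljK : l j \notin K by apply: contraL (lU j ji); apply: KU.
have := sum_deg_lt_connected_setC (connected_on_setC_component e_sym connT cU dKU Kcl) wK ljK.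
have deg3 v : v \in K -> v != l i -> deg e v = 3%N.
  move=> vK vi; apply: deg_internal; apply: contra (KU v vK) => /codomP [k vk].
  by rewrite vk; apply: lU; apply: contra vi => /eqP ik; rewrite vk ik.
have [liK | liK] := boolP (l i \in K).
  rewrite (big_setD1 (l i) liK) deg_leaf (eq_bigr (fun _ => 3%N)); last first.
    by move=> v /setD1P [vi vK]; apply: deg3.
  have : (0 < #|K :\ l i|)%N by apply/card_gt0P; exists w; rewrite in_setD1 wi.
  by rewrite sum_nat_const (cardsD1 (l i) K) liK /=; lia.
rewrite (eq_bigr (fun _ => 3%N)); last first.
  by move=> v vK; apply: deg3 => //; apply: contraNneq liK => <-.
have : (0 < #|K|)%N by apply/card_gt0P; exists w.
by rewrite sum_nat_const; lia.
Qed.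

Lemma connected_on_leavesT (U : {set V}) :
  connected_on e U -> (forall j, l j \in U) -> U = setT.
Proof.
move=> cU lU; apply/setP => w; rewrite inE.
have i : 'I_n by exists 0%N; lia.
have [-> | wi] := eqVneq w (l i); first exact: lU.
exact: (@connected_on_leaves_but U i cU (fun j _ => lU j) w wi).
Qed.

(* Two leaves joined by an edge would form a whole component, missing a third leaf. *)
Lemma card_leaves_edge E : E \in edges e -> (#|[set i | l i \in E]| <= 1)%N.
Proof.
move=> /imsetP [q]; rewrite inE => eq ->.
rewrite leqNgt; apply/negP => /card_gt1P [i [j [iE jE ij]]].
have lij : l i != l j by apply: contra ij => /eqP /l_inj ->.
have eij : e (l i) (l j).
  move: iE jE lij; rewrite !inE => /orP [] /eqP -> /orP [] /eqP ->;
    by rewrite ?eqxx // => _; rewrite e_sym.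
have [k /andP [ki kj]] : exists k, (k != i) && (k != j).
  have : (0 < #|[set~ i] :\ j|)%N.
    by move: (cardsD1 j [set~ i]); rewrite cardsC1 card_ord !inE eq_sym ij; lia.
  by move=> /card_gt0P [k]; rewrite !inE andbC; exists k.
have lk : l k \notin [set l i; l j].
  by rewrite !inE negb_or !(inj_eq l_inj) ki kj.
have /(connected_onP e_sym) cT := connT.
have [a [b [/set2P [->|->] _ + eab]]] :=
  cT _ (subsetT _) _ _ (set21 (l i) (l j)) (in_setT (l k)) lk.
- by rewrite (deg1_adj_eq (deg_leaf i) eab eij) set22.
- by rewrite (deg1_adj_eq (deg_leaf j) eab (etrans (e_sym _ _) eij)) set21.
Qed.

Lemma min_span_leaf (S : {set 'I_n}) (U : {set V}) j :
  min_span e l S U -> l j \in U -> j \in S.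
Proof.
move=> /andP [/andP [lSU cU] /forallP minU] ljU; apply: contraT => jS.
have : spans e l S (U :\ l j).
  rewrite /spans connected_on_setD1_deg1 // andbT.
  apply/subsetP => _ /imsetP [i iS ->]; rewrite in_setD1 (subsetP lSU) ?imset_f //.
  by rewrite (inj_eq l_inj) andbT; apply: contraNneq jS => <-.
by move=> /(implyP (minU _)) /subsetP /(_ _ ljU); rewrite in_setD1 eqxx.
Qed.

Variables (R : realDomainType) (wt : {set V} -> R).
Hypothesis wt_ge0 : forall E, E \in edges e -> 0 <= wt E.

Lemma min_span_setT : min_span e l setT setT.
Proof.
rewrite /min_span /spans subsetT connT; apply/forallP => U.
apply/implyP => /andP [lU cU]; rewrite (connected_on_leavesT cU) // => j.
by apply: (subsetP lU); apply: imset_f.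
Qed.

Lemma min_span_setD1 i : min_span e l (setT :\ i) (setT :\ l i).
Proof.
apply/andP; split.
  apply/andP; split; last exact: connected_on_setD1_deg1.
  apply/subsetP => _ /imsetP [j + ->]; rewrite !in_setD1 /= => /andP [ji _].
  by rewrite (inj_eq l_inj) ji in_setT.
apply/forallP => U; apply/implyP => /andP [lU cU]; apply/subsetP => w.
rewrite in_setD1 => /andP [wi _]; apply: (connected_on_leaves_but cU _ wi) => j ji.
by apply: (subsetP lU); apply: imset_f; rewrite !inE ji.
Qed.

Lemma tree_game_setT : tree_game e l wt setT = \sum_(E in edges e) wt E.
Proof.
by rewrite (tree_game_min_span _ min_span_setT); apply: eq_bigl => E; rewrite subsetT andbT.
Qed.

Lemma tree_game_setD1 i :
  tree_game e l wt (setT :\ i) = \sum_(E in edges e) wt E - leaf_weight e l wt i.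
Proof.
rewrite (tree_game_min_span _ (min_span_setD1 i)) /leaf_weight.
rewrite [X in _ = X - _](bigID (fun E : {set V} => l i \in E)) /= addrC addrK.
by apply: eq_bigl => E; rewrite subsetD1 subsetT.
Qed.

Lemma sum_leaf_weight (S : {set 'I_n}) : \sum_(i in S) leaf_weight e l wt i =
  \sum_(E in edges e | [exists i in S, l i \in E]) wt E.
Proof.
rewrite /leaf_weight (exchange_big_dep (fun E => E \in edges e)) /=; last first.
  by move=> i E _ /andP [].
rewrite [RHS]big_mkcondr /=; apply: eq_bigr => E EE.
case: existsP => [[i /andP [iS liE]] | noS]; last first.
  rewrite big_pred0 // => j; apply/negbTE/and3P => -[jS _ ljE].
  by apply: noS; exists j; rewrite jS.
have /card_le1P le1 := card_leaves_edge EE.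
have iE : i \in [set k | l k \in E] by rewrite inE.
rewrite (big_pred1 i) // => j /=; have := le1 i iE j; rewrite inE => ->.
by rewrite EE andb_idl // => /eqP ->.
Qed.

Lemma sum_edge_weight : \sum_(E in edges e) wt E =
  \sum_(i < n) leaf_weight e l wt i + \sum_(E | internal_edge e l E) wt E.
Proof.
rewrite (bigID (fun E : {set V} => [exists i, l i \in E])) /=; congr (_ + _).
  rewrite (eq_bigl (fun i => i \in [set: 'I_n])) => [|i]; last by rewrite in_setT.
  rewrite sum_leaf_weight; apply: eq_bigl => E; congr (_ && _).
  by apply: eq_existsb => i; rewrite in_setT.
by apply: eq_bigl => E; rewrite /internal_edge negb_exists.
Qed.

Lemma in_core_le_leaf_weight x i :
  in_core (tree_game e l wt) x -> x i <= leaf_weight e l wt i.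
Proof.
move=> [/(_ (setT :\ i))]; rewrite tree_game_setD1 tree_game_setT.
rewrite [X in X = _ -> _](bigD1 i) //= [X in _ <= X -> _](eq_bigl (fun j => j != i)).
  by lra.
by move=> j; rewrite !inE andbT.
Qed.

Lemma in_core_leaf_weight x : in_core (tree_game e l wt) x ->
  x =1 leaf_weight e l wt /\ \sum_(E | internal_edge e l E) wt E = 0.
Proof.
move=> core.
have diff_ge0 i : 0 <= leaf_weight e l wt i - x i.
  by rewrite subr_ge0 in_core_le_leaf_weight.
have internal_ge0 : 0 <= \sum_(E | internal_edge e l E) wt E.
  by apply: sumr_ge0 => E /andP [EE _]; apply: wt_ge0.
have xN := core.2; rewrite tree_game_setT sum_edge_weight in xN.
have diff0 : \sum_(i < n) (leaf_weight e l wt i - x i) = 0.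
  have : 0 <= \sum_(i < n) (leaf_weight e l wt i - x i) by apply: sumr_ge0.
  by rewrite sumrB; lra.
split; last by move: diff0; rewrite sumrB; lra.
move=> i; apply/eqP; rewrite eq_sym -subr_eq0; apply/eqP.
exact: psumr_eq0P (fun j _ => diff_ge0 j) diff0 i isT.
Qed.

Lemma not_in_core_internal_pos :
  (exists E, internal_edge e l E /\ 0 < wt E) -> forall x, ~ in_core (tree_game e l wt) x.
Proof.
have internal_ge0 E : internal_edge e l E -> 0 <= wt E by case/andP => EE _; apply: wt_ge0.
move=> [E [intE wtE]] x /in_core_leaf_weight [_ int0].
by move: wtE; rewrite (psumr_eq0P internal_ge0 int0) ?ltxx.
Qed.

Hypothesis internal0 : forall E, internal_edge e l E -> wt E = 0.

Lemma leaf_weight_in_core : in_core (tree_game e l wt) (leaf_weight e l wt).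
Proof.
split=> [S|]; last by rewrite tree_game_setT sum_edge_weight [X in _ + X]big1 ?addr0.
rewrite sum_leaf_weight /tree_game; case: pickP => [U minU | _]; last first.
  by apply: sumr_ge0 => E /andP [EE _]; apply: wt_ge0.
rewrite big_mkcondr [X in _ <= X]big_mkcondr /=; apply: ler_sum => E EE.
case: ifPn => [EU | _]; last by case: ifP => // _; apply: wt_ge0.
case: ifPn => // noS; rewrite internal0 // /internal_edge EE.
apply/forallP => j; apply: contra noS => ljE; apply/existsP; exists j.
by rewrite ljE andbT (min_span_leaf minU) ?(subsetP EU).
Qed.

Lemma in_core_iff_leaf_weight x : in_core (tree_game e l wt) x <-> x =1 leaf_weight e l wt.
Proof.
split=> [/in_core_leaf_weight [] // | xa].
have [le_sum sum_setT] := leaf_weight_in_core.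
by split=> [S|]; rewrite (eq_bigr _ (fun i _ => xa i)).
Qed.

End Tree.

Theorem theorem12 (R : realFieldType) (n : nat) (V : finType) (e : rel V)
  (l : 'I_n -> V) (wt : {set V} -> R) :
  (3 <= n)%N ->
  leaf_tree e l ->
  (forall E, E \in edges e -> 0 <= wt E) ->
  ((forall E, internal_edge e l E -> wt E = 0) ->
     forall x : 'I_n -> R,
       in_core (tree_game e l wt) x <-> x =1 leaf_weight e l wt) /\
  ((exists E, internal_edge e l E /\ 0 < wt E) ->
     forall x : 'I_n -> R, ~ in_core (tree_game e l wt) x).
Proof.
move=> n_gt2 [[e_sym e_irr connT card_edges] l_inj deg_leaf deg_internal] wt_ge0.
split=> [internal0 x | ]; first exact: in_core_iff_leaf_weight.
exact: not_in_core_internal_pos.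
Qed.
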